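(* Let $G$ be a graph on $n$ vertices, where $n=20$ or $n=21$, with exactly $2n-1$ edges and maximum vertex degree at most four. Then $\mathcal{E}(G)<2(n-1)$.
   Context: All graphs are finite, simple and undirected. The energy $\mathcal{E}(G)$ of a graph $G$ is the sum of the absolute values of the eigenvalues of its adjacency matrix. *)

From mathcomp Require Import all_boot all_order all_algebra all_field.
Set Implicit Arguments. Unset Strict Implicit. Unset Printing Implicit Defensive.
Import Order.TTheory GRing.Theory Num.Theory.
Local Open Scope ring_scope.

Definition simple_graph (n : nat) (e : rel 'I_n) : Prop :=
  symmetric e /\ irreflexive e.

Definition num_edges (n : nat) (e : rel 'I_n) : nat :=
  #|[set p : 'I_n * 'I_n | (p.1 < p.2)%N && e p.1 p.2]|.

Definition degree (n : nat) (e : rel 'I_n) (x : 'I_n) : nat :=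
  #|[set y | e x y]|.

Definition adj_mx (n : nat) (e : rel 'I_n) : 'M[algC]_n :=
  \matrix_(i, j) (e i j)%:R.

(* the multiset of eigenvalues (roots of the characteristic polynomial,
   with multiplicity) *)
Definition eigenvalues (n : nat) (e : rel 'I_n) : seq algC :=
  sval (closed_field_poly_normal (char_poly (adj_mx e))).

Definition energy (n : nat) (e : rel 'I_n) : algC :=
  \sum_(z <- eigenvalues e) `|z|.

From mathcomp Require Import all_boot all_order all_algebra all_field.
From mathcomp Require Import ring zify.
Import Order.TTheory GRing.Theory Num.Theory.

(* Every eigenvalue of a graph of maximum degree 4 lies in [-4, 4], where the
   quartic 2200 + 1017 t^2 - 27 t^4 dominates 2890 |t|.  Summing over the spectrum,
   2890 E <= 2200 n + 1017 tr A^2 - 27 tr A^4.  Now tr A^2 = 2m, and counting closed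
   4-walks gives tr A^4 >= 2 sum d_i^2 - 2m >= 26m - 24n, because d^2 >= 7d - 12 for
   integers d.  Hence 2890 E <= 2848 n + 1332 m, which for m = 2n - 1 is below
   5780 (n - 1) as soon as n >= 17. *)

Section WalkCounting.
Context {n : nat} (e : rel 'I_n).

Lemma degreeE i : degree e i = \sum_j e i j.
Proof.
rewrite /degree -sum1_card big_mkcond /=.
by apply: eq_bigr => j _; rewrite inE; case: (e i j).
Qed.

Definition walk2 i k := \sum_j e i j * e j k.

Hypothesis esym : symmetric e.

Lemma walk2C i k : walk2 i k = walk2 k i.
Proof. by apply: eq_bigr => j _; rewrite mulnC esym [e i j]esym. Qed.

Lemma walk2_diag i : walk2 i i = degree e i.
Proof. by rewrite degreeE; apply: eq_bigr => j _; rewrite [e j i]esym; case: (e i j). Qed.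

Lemma sum_walk2 : \sum_i \sum_k walk2 i k = \sum_j degree e j ^ 2.
Proof.
under eq_bigr do rewrite exchange_big /=.
rewrite exchange_big /=; apply: eq_bigr => j _.
rewrite -mulnn {1}degreeE big_distrl /=; apply: eq_bigr => i _.
by rewrite degreeE big_distrr /= esym.
Qed.

(* Diagonal walk counts are the degrees, and the others satisfy [w <= w ^ 2]. *)
Lemma sum_walk2_sqr :
  2 * \sum_i degree e i ^ 2 <= \sum_i \sum_k walk2 i k ^ 2 + \sum_i degree e i.
Proof.
rewrite mul2n -addnn -{1}sum_walk2 -!big_split /=; apply: leq_sum => i _.
rewrite (bigD1 i) //= [X in _ <= X + _](bigD1 i) //= walk2_diag.
rewrite addnAC [X in _ <= X]addnAC [_ ^ 2 + _]addnC leq_add2l.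
by apply: leq_sum => k _; case: (walk2 i k) => // w; rewrite -mulnn leq_pmulr.
Qed.

Lemma handshake : irreflexive e -> \sum_i degree e i = 2 * num_edges e.
Proof.
move=> eirr.
have edgesE : num_edges e = \sum_(i : 'I_n) \sum_(j : 'I_n) ((i < j) && e i j).
  rewrite /num_edges -sum1_card big_mkcond /= pair_big /=.
  by apply: eq_bigr => p _; rewrite inE; case: (_ && _).
have degree_split (i : 'I_n) :
    degree e i = \sum_(j : 'I_n) ((i < j) && e i j) + \sum_(j : 'I_n) ((j < i) && e i j).
  rewrite degreeE -big_split /=; apply: eq_bigr => j _.
  case: ltngtP => [| |/val_inj ->] //=; by rewrite ?addn0 ?eirr.
rewrite (eq_bigr _ (fun i _ => degree_split i)) big_split /= edgesE mul2n -addnn.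
congr (_ + _); rewrite exchange_big; apply: eq_bigr => i _.
by apply: eq_bigr => j _; rewrite esym.
Qed.

End WalkCounting.

Local Open Scope ring_scope.

Section Conjugation.
Context {R : comUnitRingType} {n : nat} {P : 'M[R]_n}.
Hypothesis Punit : P \in unitmx.

Lemma char_poly_conj X : char_poly (invmx P *m X *m P) = char_poly X.
Proof.
have char_poly_mx_conj : char_poly_mx (invmx P *m X *m P) =
    map_mx polyC (invmx P) *m char_poly_mx X *m map_mx polyC P.
  rewrite /char_poly_mx mulmxBr mulmxBl -!map_mxM mul_mx_scalar -scalemxAl.
  by rewrite -map_mxM mulVmx // map_mx1 scalemx1.
rewrite /char_poly char_poly_mx_conj !det_mulmx mulrAC -det_mulmx -map_mxM.
by rewrite mulVmx // map_mx1 det1 mul1r.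
Qed.

Lemma mxtrace_conj X : \tr (invmx P *m X *m P) = \tr X.
Proof. by rewrite mxtrace_mulC mulmxA mulmxV // mul1mx. Qed.

Lemma exp_conj X k : (invmx P *m X *m P) ^+ k = invmx P *m X ^+ k *m P.
Proof.
elim: k => [|k IHk]; first by rewrite !expr0 mulmx1 mulVmx.
rewrite !exprSr IHk -!mulmxE !mulmxA -[_ *m P *m invmx P]mulmxA mulmxV //.
by rewrite mulmx1.
Qed.

End Conjugation.

Lemma char_poly_diag_mx {R : comNzRingType} {n : nat} (d : 'rV[R]_n) :
  char_poly (diag_mx d) = \prod_i ('X - (d 0 i)%:P).
Proof.
rewrite char_poly_trig ?diag_mx_is_trig //.
by apply: eq_bigr => i _; rewrite mxE eqxx mulr1n.
Qed.

Lemma diag_mx_exp {R : pzSemiRingType} {n : nat} (d : 'rV[R]_n) k :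
  diag_mx d ^+ k = diag_mx (\row_j d 0 j ^+ k).
Proof.
elim: k => [|k IHk].
  by apply/matrixP => i j; rewrite expr0 !mxE; case: eqP.
by rewrite exprSr IHk -mulmxE mulmx_diag; congr diag_mx; apply/rowP => j; rewrite !mxE exprSr.
Qed.

Lemma eigenvalue_norm_le_row_sum {F : numFieldType} {n : nat} (A : 'M[F]_n) a r :
  eigenvalue A a -> (forall j, \sum_k `|A j k| <= r) -> `|a| <= r.
Proof.
move=> /eigenvalueP [v vA v_neq0] row_sum_le.
have vk k : a * v 0 k = \sum_j v 0 j * A j k.
  by have /rowP/(_ k) := vA; rewrite !mxE => <-.
set S := \sum_j `|v 0 j|.
have S_gt0 : 0 < S.
  rewrite lt_def sumr_ge0 // andbT; apply: contra v_neq0 => /eqP S0.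
  have v0 := psumr_eq0P (fun j _ => normr_ge0 (v 0 j)) S0.
  by apply/eqP/rowP => j; rewrite mxE; apply/eqP/normr0P/v0.
rewrite -(ler_pM2r S_gt0) /S !mulr_sumr.
apply: le_trans (_ : \sum_k \sum_j `|v 0 j| * `|A j k| <= _).
  apply: ler_sum => k _; rewrite -normrM vk.
  by under [X in _ <= X]eq_bigr do rewrite -normrM; apply: ler_norm_sum.
rewrite exchange_big /=; apply: ler_sum => j _.
by rewrite -mulr_sumr mulrC ler_wpM2r.
Qed.

Section Adjacency.
Context {n : nat} (e : rel 'I_n).

Lemma adj_mx_row_sum j : \sum_k `|adj_mx e j k| = (degree e j)%:R.
Proof.
rewrite degreeE natr_sum; apply: eq_bigr => k _.
by rewrite mxE normr_nat.
Qed.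

Lemma eigenvalue_adj_mx z : z \in eigenvalues e -> eigenvalue (adj_mx e) z.
Proof.
rewrite /eigenvalues eigenvalue_root_char; case: closed_field_poly_normal => s /= ->.
by rewrite rootZ ?root_prod_XsubC // lead_coef_eq0 -size_poly_eq0 size_char_poly.
Qed.

Lemma norm_eigenvalues_le D z :
  (forall x, degree e x <= D)%N -> z \in eigenvalues e -> `|z| <= D%:R.
Proof.
move=> deg_le /eigenvalue_adj_mx z_eig.
apply: (eigenvalue_norm_le_row_sum _ _ _ z_eig) => j.
by rewrite adj_mx_row_sum ler_nat.
Qed.

Lemma adj_mx_exp2E i k : (adj_mx e ^+ 2) i k = (walk2 e i k)%:R.
Proof.
rewrite expr2 -mulmxE mxE natr_sum; apply: eq_bigr => j _.
by rewrite !mxE natrM.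
Qed.

Hypothesis esym : symmetric e.

Lemma adj_mx_herm : adj_mx e \is hermsymmx.
Proof.
apply/is_hermitianmxP; rewrite expr0 scale1r.
by apply/matrixP => i j; rewrite !mxE conjC_nat esym.
Qed.

Let P := spectralmx (adj_mx e).
Let d := spectral_diag (adj_mx e).

Lemma adj_mx_spectral : adj_mx e = invmx P *m diag_mx d *m P.
Proof. exact/orthomx_spectralP/hermitian_normalmx/adj_mx_herm. Qed.

Lemma perm_eigenvalues_spectral : perm_eq (eigenvalues e) [seq d 0 i | i <- enum 'I_n].
Proof.
rewrite /eigenvalues; case: closed_field_poly_normal => s /= s_roots.
apply: prod_XsubC_eq; rewrite big_map big_enum /= -char_poly_diag_mx.
rewrite -(char_poly_conj (spectral_unit (adj_mx e))) -adj_mx_spectral.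
by rewrite s_roots (monicP (char_poly_monic _)) scale1r.
Qed.

Lemma eigenvalues_real z : z \in eigenvalues e -> z \is Num.real.
Proof.
rewrite (perm_mem perm_eigenvalues_spectral) => /mapP [i _ ->].
exact: (mxOverP (hermitian_spectral_diag_real adj_mx_herm)).
Qed.

Lemma size_eigenvalues : size (eigenvalues e) = n.
Proof. by rewrite (perm_size perm_eigenvalues_spectral) size_map size_enum_ord. Qed.

Lemma sum_eigenvalues_exp k : \sum_(z <- eigenvalues e) z ^+ k = \tr (adj_mx e ^+ k).
Proof.
rewrite (perm_big _ perm_eigenvalues_spectral) big_map big_enum /=.
rewrite adj_mx_spectral exp_conj ?mxtrace_conj ?spectral_unit // diag_mx_exp mxtrace_diag.
by apply: eq_bigr => i _; rewrite mxE.
Qed.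

Lemma mxtrace_adj_mx_exp2 : \tr (adj_mx e ^+ 2) = (\sum_i degree e i)%:R.
Proof.
rewrite natr_sum; apply: eq_bigr => i _.
by rewrite adj_mx_exp2E walk2_diag.
Qed.

Lemma mxtrace_adj_mx_exp4 : \tr (adj_mx e ^+ 4) = (\sum_i \sum_k walk2 e i k ^ 2)%:R.
Proof.
rewrite natr_sum (exprM _ 2 2) expr2 -mulmxE; apply: eq_bigr => i _.
rewrite mxE natr_sum; apply: eq_bigr => k _.
by rewrite !adj_mx_exp2E walk2C // -natrM mulnn.
Qed.

End Adjacency.

(* [(k - 3) (k - 4) >= 0] on the integers. *)
Lemma mul7n_le_sqr_add12 k : (7 * k <= k ^ 2 + 12)%N.
Proof. case: k => [|[|[|[|k]]]] //; nia. Qed.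

(* The quartic touches [2890 |x|] at [|x| = 5/3] (doubly) and at [|x| = 4]. *)
Lemma norm_le_quartic {R : numDomainType} (x : R) : x \is Num.real -> `|x| <= 4 ->
  2890 * `|x| + 27 * x ^+ 4 <= 2200 + 1017 * x ^+ 2.
Proof.
move=> x_real x_le4; set t := `|x|.
have t_ge0 : 0 <= t := normr_ge0 x.
have x2 : x ^+ 2 = t ^+ 2 by rewrite real_normK.
rewrite (exprM _ 2 2) x2 -subr_ge0.
have -> : 2200 + 1017 * t ^+ 2 - (2890 * t + 27 * (t ^+ 2) ^+ 2) =
  (3 * t - 5) ^+ 2 * ((4 - t) * (22 + 3 * t)) by ring.
apply: mulr_ge0; first by rewrite -realEsqr rpredB ?rpredM ?normr_real ?rpred_nat.
by rewrite mulr_ge0 ?subr_ge0 // addr_ge0 ?mulr_ge0.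
Qed.

Lemma energy_trace_bound {n : nat} (e : rel 'I_n) :
  symmetric e -> (forall x, degree e x <= 4)%N ->
  2890 * energy e + 27 * \tr (adj_mx e ^+ 4) <= 2200 * n%:R + 1017 * \tr (adj_mx e ^+ 2).
Proof.
move=> esym deg_le4.
rewrite -!(sum_eigenvalues_exp e esym) /energy !mulr_sumr -big_split /=.
rewrite -[in n%:R](size_eigenvalues e esym) -sum1_size natr_sum mulr_sumr -big_split /=.
rewrite big_seq_cond [X in _ <= X]big_seq_cond; apply: ler_sum => z /andP [z_eig _]; rewrite mulr1.
by apply: norm_le_quartic; [apply: eigenvalues_real | apply: norm_eigenvalues_le].
Qed.

Lemma sum_walk2_sqr_ge_num_edges {n : nat} (e : rel 'I_n) : simple_graph e ->
  (13 * (2 * num_edges e) <= \sum_i \sum_k walk2 e i k ^ 2 + 24 * n)%N.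
Proof.
move=> [esym eirr]; rewrite -handshake //.
have sum_sqr_ge : (7 * \sum_i degree e i <= \sum_i degree e i ^ 2 + 12 * n)%N.
  have -> : (12 * n = \sum_(i < n) 12)%N by rewrite sum_nat_const card_ord mulnC.
  rewrite big_distrr -big_split /=.
  by apply: leq_sum => i _; apply: mul7n_le_sqr_add12.
have := sum_walk2_sqr e esym; lia.
Qed.

Lemma energy_num_edges_bound {n : nat} (e : rel 'I_n) :
  simple_graph e -> (forall x, degree e x <= 4)%N ->
  2890 * energy e <= (2848 * n + 1332 * num_edges e)%:R.
Proof.
move=> e_simple deg_le4; have [esym eirr] := e_simple.
have := energy_trace_bound e esym deg_le4.
rewrite (mxtrace_adj_mx_exp4 e esym) (mxtrace_adj_mx_exp2 e esym) (handshake e esym eirr).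
have := sum_walk2_sqr_ge_num_edges e e_simple; rewrite -(ler_nat algC).
set W := (\sum_i _)%N; move=> walk_bound energy_bound.
rewrite -subr_ge0.
have -> : (2848 * n + 1332 * num_edges e)%:R - 2890 * energy e =
  (2200 * n%:R + 1017 * (2 * num_edges e)%:R - (2890 * energy e + 27 * W%:R))
  + 27 * ((W + 24 * n)%:R - (13 * (2 * num_edges e))%:R) :> algC.
  by ring.
by rewrite addr_ge0 ?mulr_ge0 // subr_ge0.
Qed.

Lemma energy_lt_of_num_edges {n : nat} (e : rel 'I_n) : (17 <= n)%N ->
  simple_graph e -> num_edges e = (2 * n - 1)%N -> (forall x, degree e x <= 4)%N ->
  energy e < 2 * (n - 1)%:R.
Proof.
move=> n_ge17 e_simple m_eq deg_le4.
have := energy_num_edges_bound e e_simple deg_le4; rewrite m_eq => energy_le.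
rewrite -(ltr_pM2l (_ : 0 < 2890)) //; apply: le_lt_trans energy_le _.
have -> : 2890 * (2 * (n - 1)%:R) = (2890 * (2 * (n - 1)))%:R :> algC by ring.
rewrite ltr_nat; lia.
Qed.

Theorem theorem3p2 (n : nat) (e : rel 'I_n) :
  (n = 20%N \/ n = 21%N) ->
  simple_graph e ->
  num_edges e = (2 * n - 1)%N ->
  (forall x : 'I_n, (degree e x <= 4)%N) ->
  energy e < 2 * (n - 1)%:R.
Proof. by move=> n_eq; apply: energy_lt_of_num_edges; case: n_eq => ->. Qed.
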